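(* Let $K$ be an oriented knot in $\Sigma\times I$ with a diagram $D$, and let $m(K)$ be the knot whose diagram is obtained from $D$ by switching all crossings. Then for every oriented closed curve $\gamma$ on $\Sigma$ with $[\gamma]\in\mathcal{H}_1^K(\Sigma,\mathbb{Z})$, we have $W_{m(K)}^{\gamma}(t)=-W_K^{\gamma}(t^{-1})$.
   Context: $\Sigma$ is a closed oriented surface, $I=[0,1]$; a knot in $\Sigma\times I$ is an oriented smooth embedding of $S^1$, with diagram its projection to $\Sigma$ carrying over/under information; $C(D)$ is the set of crossings and $w(c)\in\{\pm1\}$ the writhe. $\mathcal{H}_1^K(\Sigma,\mathbb{Z})=\{\alpha\in H_1(\Sigma,\mathbb{Z}):\alpha\cdot[K]=0\}$, $\cdot$ the algebraic intersection number. For a diagram $D$ transverse to $\gamma$ away from crossings: points of $D\cap\gamma$ cut $D$ into arcs; $x\in D\cap\gamma$ is positive if (tangent of $\gamma$, tangent of $D$) is a positive basis of $T_x\Sigma$, negative otherwise; a coloring assigns integers to arcs increasing by one at positive and decreasing by one at negative points when walking along $D$ (exists, unique up to a constant); $f_\gamma(c)$ is the integer on the over-strand minus that on the under-strand at $c$. The writhe polynomial is $W_K^{\gamma}(t)=\sum_{c\in C(D),\,f_\gamma(c)\neq0}w(c)t^{f_\gamma(c)}$, depending only on $K$ and $[\gamma]$. *)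

(* Combinatorial model of a knot diagram D on Sigma together
   with a transverse closed curve gamma, recorded as the cyclic sequence of
   events met while walking once along D. *)
From mathcomp Require Import all_boot all_order all_algebra.
Set Implicit Arguments. Unset Strict Implicit. Unset Printing Implicit Defensive.
Import GRing.Theory Num.Theory.
Local Open Scope ring_scope.

(* An event met when walking along D starting from a base point:
   passing crossing c on its over-strand, on its under-strand, or
   crossing gamma at a point x of D ∩ gamma (true = positive point). *)
Inductive event (n : nat) : Type :=
  | Over of 'I_n
  | Under of 'I_n
  | Gam of bool.
Arguments Over {n}. Arguments Under {n}. Arguments Gam {n}.

Record diagram := Diagram {
  ncr : nat;
  walk : seq (event ncr);
  posw : 'I_ncr -> bool
}.

Definition is_over n (c : 'I_n) (e : event n) : bool :=
  if e is Over d then d == c else false.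
Definition is_under n (c : 'I_n) (e : event n) : bool :=
  if e is Under d then d == c else false.

Arguments posw : clear implicits.
Arguments walk : clear implicits.

Definition wf_diagram (D : diagram) : Prop :=
  forall c : 'I_(ncr D),
    count (is_over c) (walk D) = 1%N /\ count (is_under c) (walk D) = 1%N.

Definition ev_sign n (e : event n) : int :=
  if e is Gam b then (if b then 1 else -1) else 0.

(* algebraic intersection number [gamma] . [K] = signed count of D ∩ gamma *)
Definition gamma_int (D : diagram) : int := \sum_(e <- walk D) ev_sign e.

(* the coloring: the integer on the arc containing position i of the walk
   (normalised to 0 on the initial arc) *)
Definition color (D : diagram) (i : nat) : int :=
  \sum_(e <- take i (walk D)) ev_sign e.

Definition writhe (D : diagram) (c : 'I_(ncr D)) : int :=
  if posw D c then 1 else -1.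

Definition f_gamma (D : diagram) (c : 'I_(ncr D)) : int :=
  color D (find (is_over c) (walk D)) - color D (find (is_under c) (walk D)).

(* The writhe polynomial W^gamma_K(t), a Laurent polynomial represented by
   its coefficient function: Wcoef D k = coefficient of t^k. *)
Arguments writhe : clear implicits.
Arguments f_gamma : clear implicits.
Definition Wcoef (D : diagram) (k : int) : int :=
  if k == 0 then 0 else \sum_(c < ncr D | f_gamma D c == k) writhe D c.

Definition switch_event n (e : event n) : event n :=
  match e with Over c => Under c | Under c => Over c | Gam b => Gam b end.

Definition mirror (D : diagram) : diagram :=
  @Diagram (ncr D) (map (@switch_event _) (walk D)) (fun c => ~~ posw D c).

From mathcomp Require Import all_boot all_order all_algebra.
Import GRing.Theory Num.Theory.
Local Open Scope ring_scope.

(* Switching every crossing leaves the curve D, its intersections with gamma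
   and hence the coloring untouched; it only exchanges the over- and
   under-strand at each crossing and negates its writhe.  So f_gamma(c)
   changes sign while w(c) does too, which is W_{m(K)}(t) = - W_K(t^-1). *)

Lemma ev_sign_switch {n} (e : event n) : ev_sign (switch_event e) = ev_sign e.
Proof. by case: e. Qed.

Lemma is_over_switch {n} (c : 'I_n) (e : event n) :
  is_over c (switch_event e) = is_under c e.
Proof. by case: e. Qed.

Lemma is_under_switch {n} (c : 'I_n) (e : event n) :
  is_under c (switch_event e) = is_over c e.
Proof. by case: e. Qed.

Lemma color_mirror (D : diagram) (i : nat) : color (mirror D) i = color D i.
Proof.
by rewrite /color /= -map_take big_map; apply: eq_bigr => e _; rewrite ev_sign_switch.
Qed.

Lemma f_gamma_mirror (D : diagram) (c : 'I_(ncr D)) :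
  f_gamma (mirror D) c = - f_gamma D c.
Proof.
rewrite /f_gamma !color_mirror /= !find_map opprB.
by rewrite (eq_find (is_over_switch c)) (eq_find (is_under_switch c)).
Qed.

Lemma writhe_mirror (D : diagram) (c : 'I_(ncr D)) :
  writhe (mirror D) c = - writhe D c.
Proof. by rewrite /writhe /=; case: (posw D c); rewrite ?opprK. Qed.

Theorem proposition3p4 (D : diagram) :
  wf_diagram D -> gamma_int D = 0 ->
  forall k : int, Wcoef (mirror D) k = - Wcoef D (- k).
Proof.
(* Both hypotheses only make W an invariant of K; the identity holds for
   every diagram. *)
move=> _ _ k; rewrite /Wcoef oppr_eq0; case: eqP => _; first by rewrite oppr0.
rewrite -sumrN; apply: eq_big => [c | c _].
- by rewrite f_gamma_mirror -eqr_oppLR.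
- exact: writhe_mirror.
Qed.
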